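(* Let $\varphi(u,\mathbf{v})$ be a formula of $\{\exists,\forall,\wedge,\vee\}$-FO, where the arity of $\mathbf{v}$ is $k$. Let $\mathcal{B}$ be a finite structure with $\forall_b \exists_{b'}$ as a she. For all $c \in B$ and $\mathbf{x}:=(x_1,\ldots,x_k) \in \{b,b'\}^k$, \[ \mathcal{B} \models \varphi(b,\mathbf{x}) \ \stackrel{(I)}{\Longrightarrow} \ \mathcal{B} \models \varphi(c,\mathbf{x}) \ \stackrel{(II)}{\Longrightarrow} \ \mathcal{B} \models \varphi(b',\mathbf{x}). \]
   Context: $\{\exists,\forall,\wedge,\vee\}$-FO is the positive equality-free fragment of first-order logic. For distinct $b,b'\in B$, the hyper-operation $\forall_b\exists_{b'}:B\to\mathfrak{P}(B)\setminus\{\emptyset\}$ maps $b\mapsto B$ and every $x\neq b$ to $\{b'\}$. A she (surjective hyper-endomorphism) of $\mathcal{B}$ is a surjective hyper-operation $f$ (every element lies in some image) such that whenever $\mathcal{B}\models R(x_1,\ldots,x_i)$ for an extensional relation $R$, also $\mathcal{B}\models R(y_1,\ldots,y_i)$ for all $y_j\in f(x_j)$. *)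

From mathcomp Require Import all_boot.
Set Implicit Arguments. Unset Strict Implicit. Unset Printing Implicit Defensive.

Section PosFO.
Variables (Sig : Type) (ar : Sig -> nat).

(* Formulas of the positive equality-free fragment {exists, forall, /\, \/}-FO.
   Variables are natural numbers. *)
Inductive pform : Type :=
  | PAtom (R : Sig) (args : (ar R).-tuple nat)
  | PAnd (p q : pform)
  | POr (p q : pform)
  | PEx (x : nat) (p : pform)
  | PAll (x : nat) (p : pform).

Fixpoint free_in (y : nat) (p : pform) : bool :=
  match p with
  | PAtom R args => y \in (args : seq nat)
  | PAnd p q => free_in y p || free_in y q
  | POr p q => free_in y p || free_in y q
  | PEx x p => (y != x) && free_in y p
  | PAll x p => (y != x) && free_in y p
  end.

Variable B : finType.
Variable interp : forall R : Sig, pred ((ar R).-tuple B).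

Definition upd (e : nat -> B) (x : nat) (a : B) : nat -> B :=
  fun y => if y == x then a else e y.

Fixpoint sat (e : nat -> B) (p : pform) : Prop :=
  match p with
  | PAtom R args => interp (map_tuple e args)
  | PAnd p q => sat e p /\ sat e q
  | POr p q => sat e p \/ sat e q
  | PEx x p => exists a : B, sat (upd e x a) p
  | PAll x p => forall a : B, sat (upd e x a) p
  end.

(* Hyper-operations B -> P(B) \ {emptyset}, represented as B -> {set B}
   (non-emptiness is part of [is_she]). *)
Definition is_she (f : B -> {set B}) : Prop :=
  [/\ (forall x, f x != set0),
      (forall y, exists x, y \in f x) &
      (forall (R : Sig) (t t' : (ar R).-tuple B),
          interp t -> (forall j : 'I_(ar R), tnth t' j \in f (tnth t j)) ->
          interp t')].

Definition forall_exists (b b' : B) : B -> {set B} :=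
  fun x => if x == b then [set: B] else [set b'].

(* Environment for phi(u, v_1..v_k): variable 0 is u, variable i+1 is v_{i+1}. *)
Definition env (k : nat) (u : B) (xs : k.-tuple B) : nat -> B :=
  fun i => if i is j.+1 then nth u xs j else u.

End PosFO.

From mathcomp Require Import all_boot.

(* A she [f] relates an assignment [e] to every [e'] with [e' y \in f (e y)],
   and satisfaction of positive equality-free formulas is preserved along this
   relation: atoms by the she condition, existential witnesses are pushed
   forward since [f a] is non-empty, universal ones pulled back by surjectivity.
   For [f = forall_b exists_b'] with [b, b'] fixed by [f], the environment with
   [u := b] is related to the one with [u := c], which is related to the one
   with [u := b']. *)

Section SheTransfer.
Variables (Sig : Type) (ar : Sig -> nat) (B : finType).
Variable interp : forall R : Sig, pred ((ar R).-tuple B).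
Variable f : B -> {set B}.

Lemma upd_rel (e e' : nat -> B) x a a' :
  (forall y, e' y \in f (e y)) -> a' \in f a ->
  forall y, upd e' x a' y \in f (upd e x a y).
Proof. by move=> ee' aa' y; rewrite /upd; case: (y == x). Qed.

Lemma she_sat (phi : pform ar) (e e' : nat -> B) :
  is_she interp f -> (forall y, e' y \in f (e y)) ->
  sat interp e phi -> sat interp e' phi.
Proof.
case=> f_neq0 f_onto f_hom.
elim: phi e e' => [R args|p IHp q IHq|p IHp q IHq|x p IHp|x p IHp] e e' ee' /=.
- by move=> /f_hom; apply=> j; rewrite !tnth_map.
- by case=> /(IHp _ _ ee') ? /(IHq _ _ ee').
- by case=> [/(IHp _ _ ee')|/(IHq _ _ ee')]; [left|right].
- case=> a sat_a; have [|[a' aa']] := set_0Vmem (f a).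
    by move/eqP; rewrite (negbTE (f_neq0 a)).
  by exists a'; apply: IHp sat_a; apply: upd_rel.
- move=> sat_all a'; have [a aa'] := f_onto a'.
  by apply: IHp (sat_all a); apply: upd_rel.
Qed.

Lemma env_rel k u u' (xs : k.-tuple B) :
  u' \in f u -> (forall i : 'I_k, tnth xs i \in f (tnth xs i)) ->
  forall y, env u' xs y \in f (env u xs y).
Proof.
move=> uu' xs_fixed [|j] //=; have [lt_jk|le_kj] := ltnP j k.
  rewrite (set_nth_default u) ?size_tuple //.
  by have := xs_fixed (Ordinal lt_jk); rewrite (tnth_nth u).
by rewrite !nth_default ?size_tuple.
Qed.

End SheTransfer.

Section ForallExists.
Variables (B : finType) (b b' : B).

Lemma forall_exists_b z : z \in forall_exists b b' b.
Proof. by rewrite /forall_exists eqxx inE. Qed.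

Lemma forall_exists_b' z : b' \in forall_exists b b' z.
Proof. by rewrite /forall_exists; case: (z == b); rewrite inE. Qed.

Lemma forall_exists_fixed x :
  b != b' -> x \in [:: b; b'] -> x \in forall_exists b b' x.
Proof.
move=> neq_bb'; rewrite !inE => /orP[] /eqP ->; first exact: forall_exists_b.
exact: forall_exists_b'.
Qed.

End ForallExists.

Theorem lemma3p3 (Sig : Type) (ar : Sig -> nat) (B : finType)
  (interp : forall R : Sig, pred ((ar R).-tuple B))
  (k : nat) (phi : pform ar)
  (Hfree : forall y, free_in y phi -> y <= k)
  (b b' : B) (Hbb' : b != b')
  (Hshe : is_she interp (forall_exists b b'))
  (c : B) (xs : k.-tuple B)
  (Hxs : forall i : 'I_k, tnth xs i \in [:: b; b']) :
  (sat interp (env b xs) phi -> sat interp (env c xs) phi) /\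
  (sat interp (env c xs) phi -> sat interp (env b' xs) phi).
Proof.
have xs_fixed i : tnth xs i \in forall_exists b b' (tnth xs i).
  exact: forall_exists_fixed.
split; apply: she_sat Hshe _; apply: env_rel => //.
- exact: forall_exists_b.
- exact: forall_exists_b'.
Qed.
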